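(* Let $v>0$, $d>0$, $s\ge d/2$ and $\theta\in[0,\pi/3)$. Let $\Lambda_\theta=\{a\,d\,(\cos\theta,\sin\theta)+b\,d\,(\cos(\theta+\pi/3),\sin(\theta+\pi/3)) : a,b\in\mathbb{Z}\}$. Robots start at time $0$ at the positions $(s,0)+q$ for all $q\in\Lambda_\theta$ with $q_x\ge0$ (where $q=(q_x,q_y)$), and move with constant velocity $(-v,0)$; the robot starting at $(s,0)+q$ has reached the target by time $T$ iff $\|(s,0)+q-(vt,0)\|\le s$ for some $t\in[0,T]$. Let $N(T)$ be the number of robots that have reached the target by time $T$ and $f_h(T,\theta)=\frac{N(T)-1}{T}$. Then $\lim_{T\to\infty}f_h(T,\theta)$ exists and $$\lim_{T\to\infty}f_h(T,\theta)\in\left(\frac{4vs}{\sqrt3 d^2}-\frac{2v\cos(\theta-\pi/6)}{\sqrt3 d},\ \frac{4vs}{\sqrt3 d^2}+\frac{2v\cos(\theta-\pi/6)}{\sqrt3 d}\right].$$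
   Context: The target is the closed disc of radius $s$ centred at the origin. The robots form a hexagonal packing (triangular lattice of spacing $d$) whose hexagonal packing angle is $\theta$: the angle between the $x$-axis and the segment from any robot to one of its neighbours at $(x+d\cos\theta,y+d\sin\theta)$; by periodicity angles are taken in $[0,\pi/3)$. The robot with $q=0$ is the first to reach the target, at time $0$. $f_h(T,\theta)$ is the throughput at time $T$. *)

From HB Require Import structures.
From mathcomp Require Import all_boot all_order all_algebra.
From mathcomp Require Import finmap.
From mathcomp Require Import all_classical all_reals all_analysis.
Set Implicit Arguments. Unset Strict Implicit. Unset Printing Implicit Defensive.
Import Order.TTheory GRing.Theory Num.Theory.
Import numFieldNormedType.Exports.
Local Open Scope classical_set_scope.
Local Open Scope ring_scope.

Definition latx {R : realType} (d th : R) (a b : int) : R :=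
  a%:~R * d * cos th + b%:~R * d * cos (th + pi / 3).
Definition laty {R : realType} (d th : R) (a b : int) : R :=
  a%:~R * d * sin th + b%:~R * d * sin (th + pi / 3).

Definition reached {R : realType} (v d s th T : R) (ab : int * int) : Prop :=
  0 <= latx d th ab.1 ab.2 /\
  exists t : R, 0 <= t <= T /\
    Num.sqrt ((s + latx d th ab.1 ab.2 - v * t) ^+ 2 + (laty d th ab.1 ab.2) ^+ 2) <= s.

Definition Nreached {R : realType} (v d s th T : R) : nat :=
  #|` fset_set [set ab : int * int | reached v d s th T ab] |%fset.

Definition f_h {R : realType} (v d s th T : R) : R :=
  ((Nreached v d s th T)%:R - 1) / T.

From HB Require Import structures.
From mathcomp Require Import all_boot all_order all_algebra.
From mathcomp Require Import finmap.
From mathcomp Require Import all_classical all_reals all_analysis.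
From mathcomp Require Import ring lra zify.
Import Order.TTheory GRing.Theory Num.Theory.
Import numFieldNormedType.Exports.
Local Open Scope classical_set_scope.
Local Open Scope ring_scope.
Set Implicit Arguments. Unset Strict Implicit.

(* Group the lattice points into rows [a = const]; consecutive rows are [row_gap = d sqrt 3 / 2]
   apart in the direction of motion, after rescaling [x] by [sin (th + pi / 3)].  Up to a bounded
   number of rows at either end, the robots that have reached the disc by time [T] are the lattice
   points of the strip [|y| <= s] lying in the first [v T sin (th + pi / 3) / row_gap] rows.  Row [a]
   meets the strip in [2 w + 1 - {w + a g} - {w - a g}] points, where [w] is the [half_width]
   [s / (d sin (th + pi / 3))], [g] is the [slope] [sin th / sin (th + pi / 3)] and [{.}] is the
   fractional part.  The Cesaro means of [{u + a g}] exist and lie in [0, 1): for rational [g] they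
   are period averages, for irrational [g] they equal [1 / 2], as one sees by averaging over shifts
   by a small fractional part [{k g}].  Hence [N(T) / T] converges to [mu v sin (th + pi / 3) / row_gap]
   with [2 w - 1 < mu <= 2 w + 1]. *)

Section FractionalPart.
Variable R : realType.
Implicit Types (x u g : R) (z : int).

Definition frac x : R := x - (Num.floor x)%:~R.

Lemma frac_ge0 x : 0 <= frac x.
Proof. by rewrite /frac subr_ge0 floor_le. Qed.

Lemma frac_lt1 x : frac x < 1.
Proof. have := floorD1_gt x; rewrite /frac intrD; lra. Qed.

Lemma fracDz x z : frac (x + z%:~R) = frac x.
Proof. by rewrite /frac floorDrz ?intr_int // intrKfloor intrD; ring. Qed.

Lemma frac_id x : 0 <= x -> x < 1 -> frac x = x.
Proof. by move=> x0 x1; rewrite /frac (@floor_def _ x 0) ?subr0 ?x0 ?add0r. Qed.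

Lemma frac_floorE x : x = frac x + (Num.floor x)%:~R.
Proof. by rewrite /frac; ring. Qed.

Lemma sum_frac_bounds (F : nat -> R) m n :
  0 <= \sum_(m <= i < n) frac (F i) <= (n - m)%:R.
Proof.
rewrite sumr_ge0 => [|i _]; last exact: frac_ge0.
rewrite -(sumr_const_nat n m 1) ler_sum // => i _.
exact/ltW/frac_lt1.
Qed.

Definition fracsum (n : nat) u g := \sum_(0 <= a < n) frac (u + a%:R * g).

Lemma fracsum_bounds n u g : 0 <= fracsum n u g <= n%:R.
Proof. by rewrite -[n in n%:R]subn0; apply: sum_frac_bounds. Qed.

Lemma fracsum_shift n m u g :
  `|fracsum n (u + m%:R * g) g - fracsum n u g| <= m%:R.
Proof.
pose S i j := \sum_(i <= a < j) frac (u + a%:R * g).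
have -> : fracsum n (u + m%:R * g) g = S m (n + m)%N.
  rewrite /S [in RHS](_ : m = 0 + m)%N // big_addn add0n addnK.
  by apply: eq_bigr => a _; rewrite natrD; congr frac; ring.
have split_at k : (k <= n + m)%N -> S 0%N (n + m)%N = S 0%N k + S k (n + m)%N.
  by move=> hk; rewrite /S (@big_cat_nat _ _ _ k).
have := split_at m (leq_addl _ _); have := split_at n (leq_addr _ _).
have b1 : 0 <= S 0%N m <= m%:R.
  by rewrite -[m in m%:R]subn0; apply: sum_frac_bounds.
have b2 : 0 <= S n (n + m)%N <= m%:R.
  by rewrite -[m in m%:R](addKn n); apply: sum_frac_bounds.
rewrite /fracsum -/(S 0%N n) => e1 e2.
rewrite ler_norml; apply/andP; split; lra.
Qed.

End FractionalPart.

Section AsymptoticRate.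
Variable R : realType.
Implicit Types (F G : nat -> R) (L M : R).

Definition asymptotic_rate (F : nat -> R) (L : R) :=
  forall e : R, 0 < e -> exists B : R, forall n, `|F n - n%:R * L| <= e * n%:R + B.

Lemma asymptotic_rate_perturb F G L (C : R) :
  asymptotic_rate F L -> (forall n, `|G n - F n| <= C) -> asymptotic_rate G L.
Proof.
move=> hF hGF e e0; have [B hB] := hF e e0; exists (B + C) => n.
have := hB n; have := hGF n; rewrite !ler_norml => /andP[? ?] /andP[? ?].
apply/andP; split; lra.
Qed.

Lemma asymptotic_rateD F G L M : asymptotic_rate F L -> asymptotic_rate G M ->
  asymptotic_rate (fun n => F n + G n) (L + M).
Proof.
move=> hF hG e e0; have e2 : 0 < e / 2 by rewrite divr_gt0.
have [B1 hB1] := hF _ e2; have [B2 hB2] := hG _ e2; exists (B1 + B2) => n.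
have := hB1 n; have := hB2 n; rewrite !ler_norml => /andP[? ?] /andP[? ?].
apply/andP; split; nra.
Qed.

Lemma asymptotic_rateN F L : asymptotic_rate F L -> asymptotic_rate (fun n => - F n) (- L).
Proof.
by move=> hF e e0; have [B hB] := hF e e0; exists B => n; rewrite mulrN -opprD normrN.
Qed.

Lemma asymptotic_rate_linear L : asymptotic_rate (fun n => n%:R * L) L.
Proof. by move=> e e0; exists 0 => n; rewrite subrr normr0 addr0 mulr_ge0 // ltW. Qed.

Lemma asymptotic_rate_at (F : nat -> R) (mu r C : R) : asymptotic_rate F mu -> 0 <= r ->
  forall e, 0 < e -> exists K, forall (T : R) (n : nat), 0 <= T ->
    `|n%:R - r * T| <= C -> `|F n - mu * r * T| <= e * T + K.
Proof.
move=> hF r0 e e0; set e' := e / (r + 1).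
have e'0 : 0 < e' by rewrite divr_gt0 //; lra.
have e'r : e' * r <= e by rewrite mulrAC ler_pdivrMr; nra.
have [B hB] := hF _ e'0.
exists (e' * C + B + `|mu| * C) => T n T0 hn.
have hnC : n%:R <= r * T + C by move: hn; rewrite ler_norml => /andP[_]; lra.
have h1 : `|n%:R * mu - mu * r * T| <= `|mu| * C.
  by rewrite (_ : _ - _ = mu * (n%:R - r * T)) ?normrM ?ler_wpM2l //; ring.
have h2 : e' * n%:R <= e * T + e' * C.
  by have := ler_wpM2l (ltW e'0) hnC; have := ler_wpM2r T0 e'r; lra.
apply: le_trans (ler_distD (n%:R * mu) _ _) _; have := hB n; lra.
Qed.

End AsymptoticRate.

Section RationalStep.
Variable R : realType.
Implicit Types (u g : R).

Lemma rational_int_multiple g :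
  rational g -> exists k (z : int), (0 < k)%N /\ k%:R * g = z%:~R.
Proof.
move=> /rationalP[a [[|b] ->]]; first by exists 1%N, 0; rewrite invr0 !mulr0.
by exists b.+1, a; split => //; rewrite mulrC divfK ?pnatr_eq0.
Qed.

Lemma irrational_int_multiple g k (z : int) :
  irrational g -> (0 < k)%N -> k%:R * g != z%:~R.
Proof.
move=> hg k0; apply/eqP => hk; apply: hg; apply/rationalP; exists z, k.
by rewrite -hk mulrAC divff ?mul1r // pnatr_eq0 -lt0n.
Qed.

Lemma fracsum_periodic j r k u g (z : int) : k%:R * g = z%:~R ->
  fracsum (j * k + r) u g = j%:R * fracsum k u g + fracsum r u g.
Proof.
move=> hk; elim: j => [|j IH]; first by rewrite mul0n add0n mul0r add0r.
rewrite mulSnr addnAC /fracsum (@big_cat_nat _ _ _ k) ?leq_addl //= -/(fracsum k u g).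
have -> : \sum_(k <= a < j * k + r + k) frac (u + a%:R * g) = fracsum (j * k + r) u g.
  rewrite -{1}[k]add0n big_addn addnK; apply: eq_bigr => a _.
  by rewrite natrD mulrDl hk addrA fracDz.
by rewrite IH -natr1 -/(fracsum r u g); ring.
Qed.

Lemma fracsum_periodic_error k (z : int) u g : (0 < k)%N -> k%:R * g = z%:~R ->
  forall n, `|fracsum n u g - n%:R * (fracsum k u g / k%:R)| <= k%:R.
Proof.
move=> k0 hk n; rewrite {1 2}(divn_eq n k) (fracsum_periodic _ _ _ hk) natrD natrM.
have kp : 0 < (k%:R : R) by rewrite ltr0n.
set q := (n %/ k)%:R; set r := (n %% k)%N; set G := fracsum k u g.
have rk : (r%:R : R) <= k%:R by rewrite ler_nat ltnW // ltn_mod.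
have [Gk0 Gk1] := andP (fracsum_bounds k u g); have [Gr0 Gr1] := andP (fracsum_bounds r u g).
have -> : (q * k%:R + r%:R) * (G / k%:R) = q * G + r%:R * (G / k%:R).
  by field; rewrite gt_eqF.
have hG : 0 <= G / k%:R <= 1 by rewrite divr_ge0 //= ler_pdivrMr ?mul1r.
have r0 : 0 <= (r%:R : R) by [].
set GG := G / k%:R in hG *.
have h4 : 0 <= r%:R * GG <= r%:R by nra.
rewrite ler_norml; apply/andP; split; lra.
Qed.

Lemma fracsum_rate_rational k (z : int) u g : (0 < k)%N -> k%:R * g = z%:~R ->
  asymptotic_rate (fun n => fracsum n u g) (fracsum k u g / k%:R).
Proof.
move=> k0 hk e e0; exists k%:R => n; apply: le_trans (fracsum_periodic_error u k0 hk n) _.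
by rewrite lerDr mulr_ge0 // ltW.
Qed.

Lemma fracsum_mean_lt1 k u g : (0 < k)%N -> fracsum k u g / k%:R < 1.
Proof.
move=> k0; rewrite ltr_pdivrMr ?ltr0n // mul1r /fracsum -[k in k%:R]subn0.
rewrite -sumr_const_nat; apply: ltr_sum_nat => // a _; exact: frac_lt1.
Qed.

End RationalStep.

Lemma pigeonhole_nat (N : nat) (f : nat -> nat) :
  (forall i, (i <= N)%N -> (f i < N)%N) -> exists i j, (i < j <= N)%N /\ f i = f j.
Proof.
move=> hf; have hF (i : 'I_N.+1) : (f i < N)%N by apply: hf; rewrite -ltnS.
pose F (i : 'I_N.+1) : 'I_N := Ordinal (hF i).
apply: contrapT => hno.
suff /leq_card : injective F by rewrite !card_ord ltnn.
move=> i j /(congr1 val) /= hij; apply: val_inj => /=.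
case: (ltngtP i j) => // hlt; exfalso; apply: hno.
  by exists i, j; rewrite hlt -ltnS ltn_ord.
by exists j, i; rewrite hlt -ltnS ltn_ord.
Qed.

Section IrrationalStep.
Variable R : realType.
Implicit Types (x g e : R).

Lemma truncn_inv_bracket e : 0 < e ->
  (Num.truncn e^-1)%:R * e <= 1 < (Num.truncn e^-1).+1%:R * e.
Proof.
move=> e0; have ei : 0 <= e^-1 by rewrite invr_ge0 ltW.
have /andP[h1 h2] := truncn_itv ei.
by rewrite -ler_pdivlMr // -ltr_pdivrMr // !div1r h1 h2.
Qed.

Lemma frac_mul_close g (N : nat) : (0 < N)%N -> exists i j : nat,
  (i < j <= N)%N /\ `|frac (j%:R * g) - frac (i%:R * g)| < N%:R^-1.
Proof.
move=> N0; have Np : 0 < (N%:R : R) by rewrite ltr0n.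
pose f i := Num.truncn (N%:R * frac (i%:R * g)).
have hf i : (f i)%:R <= N%:R * frac (i%:R * g) < (f i).+1%:R.
  by apply: truncn_itv; rewrite mulr_ge0 ?frac_ge0.
have [i [j [hij fij]]] : exists i j, (i < j <= N)%N /\ f i = f j.
  apply: pigeonhole_nat => i _; rewrite -(ltr_nat R).
  have := hf i; have := frac_lt1 (i%:R * g); have := frac_ge0 (i%:R * g); nra.
exists i, j; split => //.
have := hf i; have := hf j; rewrite fij -natr1 => /andP[h1 h2] /andP[h3 h4].
rewrite -div1r ltr_pdivlMr // -(gtr0_norm Np) -normrM ltr_norml.
apply/andP; split; lra.
Qed.

Lemma frac_mul_small_of_near_int g k (Z : int) dl : irrational g -> (0 < k)%N ->
  k%:R * g = dl + Z%:~R -> `|dl| < 1 -> exists k' : nat, (0 < k')%N /\ 0 < frac (k'%:R * g) <= `|dl|.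
Proof.
move=> hg k0 ek dl1.
have [dl0|dl0] := lerP 0 dl.
  have dlnz : dl != 0.
    apply/eqP => dl00; move: (irrational_int_multiple Z hg k0).
    by rewrite ek dl00 add0r eqxx.
  rewrite ger0_norm // in dl1 *.
  exists k; split => //; rewrite ek fracDz frac_id //.
  by rewrite lt0r dlnz dl0 /=.
rewrite ltr0_norm // in dl1 *; set eta := - dl in dl0 dl1 *.
have eta0 : 0 < eta by rewrite oppr_gt0.
set m := Num.truncn eta^-1.
have /andP[hm1 hm2] := truncn_inv_bracket eta0; rewrite -/m -natr1 mulrDl mul1r in hm2.
have m0 : (0 < m)%N by rewrite lt0n; apply/eqP => m0; move: hm2; rewrite m0 mul0r add0r; lra.
(* [m k g = - m eta] modulo 1, and [0 <= 1 - m eta < eta] *)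
have em : (m * k)%:R * g = (1 - m%:R * eta) + (m%:Z * Z - 1)%:~R.
  by rewrite natrM -mulrA ek !(intrB, intrM) /eta; ring.
have mk : (0 < m * k)%N by rewrite muln_gt0 m0.
exists (m * k)%N; split => //; rewrite em fracDz frac_id; try lra.
rewrite subr_gt0 lt_neqAle hm1 andbT; apply/andP; split; last lra.
apply/eqP => h1; move: (irrational_int_multiple (m%:Z * Z - 1) hg mk).
by rewrite em h1 subrr add0r eqxx.
Qed.

Lemma frac_mul_small g e : irrational g -> 0 < e ->
  exists k : nat, (0 < k)%N /\ 0 < frac (k%:R * g) <= e.
Proof.
move=> hg e0.
have [N [N0 hN]] : exists N : nat, (0 < N)%N /\ N%:R^-1 < e.
  exists (Num.truncn e^-1).+1; split => //.
  by rewrite -div1r ltr_pdivrMr ?ltr0n // mulrC; case/andP: (truncn_inv_bracket e0).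
have N1 : N%:R^-1 <= (1 : R) by rewrite invf_le1 ?ltr0n // ler1n.
have [i [j [/andP[ij jN] hd]]] := frac_mul_close g N0.
have k0 : (0 < j - i)%N by rewrite subn_gt0.
have ek : (j - i)%:R * g = (frac (j%:R * g) - frac (i%:R * g))
    + (Num.floor (j%:R * g) - Num.floor (i%:R * g))%:~R.
  by rewrite natrB 1?ltnW // intrB /frac; ring.
have [k [k0' /andP[fk0 fk]]] := frac_mul_small_of_near_int hg k0 ek (lt_le_trans hd N1).
by exists k; split => //; rewrite fk0 /=; lra.
Qed.

Definition count_ge (J : nat) (t : R) : R := \sum_(0 <= j < J) (t <= j%:R)%R%:R.

Lemma count_ge_bounds J t : 0 <= t ->
  J%:R - t - 1 <= count_ge J t /\ (count_ge J t = 0 \/ count_ge J t <= J%:R - t).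
Proof.
move=> t0; elim: J => [|J [IH1 IH2]]; rewrite /count_ge.
  by rewrite big_geq //; split; [rewrite sub0r; lra | left].
rewrite big_nat_recr //= -/(count_ge J t) -natr1.
have c0 : 0 <= count_ge J t by rewrite sumr_ge0.
case: (lerP t J%:R) => htJ /=.
  split; first lra.
  by right; case: IH2 => IH2; lra.
rewrite addr0; split; first lra.
by left; case: IH2 => // IH2; lra.
Qed.

Lemma sum_nat_double J : \sum_(0 <= j < J) (j%:R : R) * 2 = J%:R * (J%:R - 1).
Proof.
elim: J => [|J IH]; first by rewrite big_geq // mul0r.
by rewrite big_nat_recr //= IH -natr1; ring.
Qed.

(* with [x0 = frac x], the [j]-th term is [x0 + j e], minus one once [j e] passes [1 - x0] *)
Lemma frac_sum_fine_step x e (J : nat) : 0 < e -> J%:R * e <= 1 < (J%:R + 1) * e ->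
  (1 <= J)%N -> `|\sum_(0 <= j < J) frac (x + j%:R * e) - J%:R / 2| <= 2.
Proof.
move=> e0 /andP[hJ1 hJ2] J1.
set x0 := frac x; have /andP[h0 h1] : 0 <= x0 < 1 by rewrite frac_ge0 frac_lt1.
set t := (1 - x0) / e.
have hterm j : (j < J)%N -> frac (x + j%:R * e) = x0 + j%:R * e - (t <= j%:R)%R%:R.
  move=> jJ; have : (j.+1 <= J)%N := jJ; rewrite -(ler_nat R) -natr1 => jJ'.
  have je : 0 <= j%:R * e by rewrite mulr_ge0 // ltW.
  rewrite {1}(frac_floorE x) addrAC fracDz -/x0.
  have [h|h] := lerP t j%:R; rewrite /t in h.
  - rewrite ler_pdivrMr // in h.
    have -> : x0 + j%:R * e = (x0 + j%:R * e - 1) + 1%:~R.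
      by rewrite (_ : 1%:~R = 1) //; ring.
    rewrite fracDz frac_id /=; nra.
  - by rewrite ltr_pdivlMr // in h; rewrite subr0 frac_id //; nra.
rewrite (eq_big_nat _ _ (F2 := fun j => x0 + j%:R * e - (t <= j%:R)%R%:R)); last first.
  by move=> j /andP[_]; apply: hterm.
rewrite sumrB big_split /= sumr_const_nat subn0 -mulr_suml -/(count_ge J t).
have -> : \sum_(0 <= i < J) (i%:R : R) = J%:R * (J%:R - 1) / 2.
  by rewrite -sum_nat_double -mulr_suml; field.
have J1' : 1 <= (J%:R : R) by rewrite ler1n.
have ht1 : (1 - x0) * J%:R <= t by rewrite /t ler_pdivlMr //; nra.
have ht2 : t <= (1 - x0) * (J%:R + 1) by rewrite /t ler_pdivrMr //; nra.
have t0 : 0 <= t by rewrite divr_ge0 ?subr_ge0 ?ltW.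
have [C1 C2] := count_ge_bounds J t0.
have c0 : 0 <= count_ge J t by rewrite sumr_ge0.
rewrite -mulr_natl ler_norml; apply/andP; split; last by nra.
by case: C2 => C2; nra.
Qed.

End IrrationalStep.

Section MeanOfFractionalParts.
Variable R : realType.
Implicit Types (u g : R) (F : nat -> R).

Lemma norm_sum_nat_le (m n : nat) F (c : R) :
  (forall i, (m <= i < n)%N -> `|F i| <= c) -> `|\sum_(m <= i < n) F i| <= (n - m)%:R * c.
Proof.
move=> hF; apply: le_trans (ler_norm_sum _ _ _) _.
by rewrite mulr_natl -sumr_const_nat; apply: ler_sum_nat.
Qed.

Lemma sum_fracsum_fine_shifts n u g eta (J : nat) : 0 < eta ->
  J%:R * eta <= 1 < (J%:R + 1) * eta -> (1 <= J)%N ->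
  `|\sum_(0 <= j < J) fracsum n (u + j%:R * eta) g - n%:R * (J%:R / 2)| <= n%:R * 2.
Proof.
move=> eta0 hJ J1.
have -> : \sum_(0 <= j < J) fracsum n (u + j%:R * eta) g =
    \sum_(0 <= a < n) \sum_(0 <= j < J) frac ((u + a%:R * g) + j%:R * eta).
  rewrite /fracsum exchange_big_nat /=; apply: eq_bigr => a _; apply: eq_bigr => j _.
  by congr frac; ring.
have -> : n%:R * (J%:R / 2) = \sum_(0 <= a < n) (J%:R / 2 : R).
  by rewrite sumr_const_nat subn0 mulr_natl.
rewrite -sumrB -[n in n%:R * 2]subn0; apply: norm_sum_nat_le => a _.
exact: frac_sum_fine_step.
Qed.

(* averaging over [J] shifts by multiples of [eta = frac (k g)] turns each sum into a fine-step sum *)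
Lemma fracsum_rate_irrational u g : irrational g ->
  asymptotic_rate (fun n => fracsum n u g) (1 / 2).
Proof.
move=> hg e e0.
have e'0 : 0 < e / (2 + e) by rewrite divr_gt0 //; lra.
have [k [k0 /andP[eta0 etae]]] := frac_mul_small hg e'0.
set eta := frac (k%:R * g) in eta0 etae.
set J := Num.truncn eta^-1.
have /andP[hJ1 hJ2] := truncn_inv_bracket eta0; rewrite -/J -natr1 in hJ1 hJ2.
have eJ : 2 <= e * J%:R.
  have : 1 < (J%:R + 1) * (e / (2 + e)) by apply: (lt_le_trans hJ2); rewrite ler_wpM2l.
  by rewrite mulrA ltr_pdivlMr; nra.
have J1 : (1 <= J)%N by rewrite lt0n; apply/eqP => J0; move: eJ; rewrite J0 mulr0; lra.
have Jp : 0 < (J%:R : R) by rewrite ltr0n.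
exists (J * k)%:R => n.
have hS1 := sum_fracsum_fine_shifts n u g eta0 (introT andP (conj hJ1 hJ2)) J1.
set S := \sum_(0 <= j < J) fracsum n (u + j%:R * eta) g in hS1 *.
have hS2 : `|S - J%:R * fracsum n u g| <= J%:R * (J * k)%:R.
  have -> : J%:R * fracsum n u g = \sum_(0 <= j < J) fracsum n u g.
    by rewrite sumr_const_nat subn0 mulr_natl.
  rewrite -sumrB -[J in J%:R * _]subn0; apply: norm_sum_nat_le => j /andP[_ jJ].
  have -> : u + j%:R * eta = u + (j * k)%:R * g + (- (j%:Z * Num.floor (k%:R * g)))%:~R.
    by rewrite /eta /frac natrM intrN intrM; ring.
  rewrite /fracsum; under eq_bigr do rewrite addrAC fracDz; rewrite -/(fracsum _ _ _).
  by apply: le_trans (fracsum_shift _ _ _ _) _; rewrite ler_nat leq_mul2r ltnW ?orbT.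
set X := fracsum n u g in hS2 *; set B := ((J * k)%:R : R) in hS2 *.
have hn : 2 * n%:R <= e * J%:R * n%:R by apply: ler_wpM2r.
move: hS1 hS2; rewrite !ler_norml => /andP[a1 a2] /andP[b1 b2].
have c1 : J%:R * (X - n%:R * (1 / 2)) <= J%:R * (e * n%:R + B) by lra.
have c2 : J%:R * (- (e * n%:R + B)) <= J%:R * (X - n%:R * (1 / 2)) by lra.
by apply/andP; split; rewrite -(ler_pM2l Jp).
Qed.

Lemma fracsum_mean u g : exists2 L, 0 <= L < 1 & asymptotic_rate (fun n => fracsum n u g) L.
Proof.
have [/rational_int_multiple [k [z [k0 hk]]] | hg] := pselect (rational g).
  exists (fracsum k u g / k%:R); last exact: fracsum_rate_rational hk.
  by rewrite fracsum_mean_lt1 // divr_ge0 //; case/andP: (fracsum_bounds k u g).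
by exists (1 / 2); [apply/andP; split; lra | exact: fracsum_rate_irrational].
Qed.

Lemma fracsum_shift_int n (l : int) u g :
  `|fracsum n (u + l%:~R * g) g - fracsum n u g| <= (`|l|%N)%:R.
Proof.
case: l => m; first exact: fracsum_shift.
rewrite NegzE abszN absz_nat distrC.
have := fracsum_shift n m.+1 (u + (- m.+1%:Z)%:~R * g) g.
by rewrite intrN mulNr addrNK.
Qed.

End MeanOfFractionalParts.

Section PiThird.
Variable R : realType.

Lemma pi3_in_0pi : 0 < (pi : R) / 3 < pi.
Proof. by have := pi_gt0 R => ?; apply/andP; split; lra. Qed.

(* [sin (pi / 3) = sin (pi - pi / 3) = sin (2 pi / 3) = 2 sin (pi / 3) cos (pi / 3)] *)
Lemma cos_pi3 : cos (pi / 3) = 1 / 2 :> R.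
Proof.
have s0 : 0 < sin (pi / 3 : R) by apply: sin_gt0_pi; exact: pi3_in_0pi.
have : sin (pi / 3) = (cos (pi / 3) * sin (pi / 3)) *+ 2 :> R.
  rewrite -sin_mulr2n (_ : _ *+ 2 = pi - pi / 3); last by rewrite mulr2n; field.
  by rewrite sinB sinpi cospi; ring.
rewrite mulr2n; nra.
Qed.

Lemma sin_pi3 : sin (pi / 3) = Num.sqrt 3 / 2 :> R.
Proof.
have s0 : 0 <= sin (pi / 3 : R) by apply/ltW/sin_gt0_pi; exact: pi3_in_0pi.
have q3 : Num.sqrt 3 ^+ 2 = 3 :> R by rewrite sqr_sqrtr.
apply/eqP; rewrite -(@eqrXn2 _ 2) ?divr_ge0 // sin2cos2 cos_pi3 !expr_div_n q3.
by apply/eqP; field.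
Qed.

End PiThird.

Definition int_range (l : int) (n : nat) : seq int := [seq l + i%:Z | i <- iota 0 n].

Lemma mem_int_range (l : int) (n : nat) (a : int) : (a \in int_range l n) = (l <= a < l + n%:Z).
Proof.
apply/mapP/idP => [[j]|/andP[h1 h2]].
  by rewrite mem_iota add0n => /andP[_ hj] ->; move: hj; rewrite -ltz_nat; lia.
exists `|a - l|%N; last by rewrite gez0_abs; lia.
by rewrite mem_iota add0n /= -ltz_nat gez0_abs; lia.
Qed.

Lemma uniq_int_range (l : int) (n : nat) : uniq (int_range l n).
Proof. by rewrite map_inj_uniq ?iota_uniq // => i j /addrI []. Qed.

Section LatticeRows.
Variable R : realType.
Variables (d s th : R).

Definition sin3 := sin (th + pi / 3).
Definition cos3 := cos (th + pi / 3).
Definition row_gap := d * (Num.sqrt 3 / 2).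
Definition half_width := s / (d * sin3).
Definition slope := sin th / sin3.

Hypotheses (d_gt0 : 0 < d) (s_ge0 : 0 <= s) (sin3_gt0 : 0 < sin3).

Lemma row_gap_gt0 : 0 < row_gap.
Proof. by rewrite mulr_gt0 // divr_gt0 // sqrtr_gt0. Qed.

Lemma half_width_ge0 : 0 <= half_width.
Proof. by rewrite divr_ge0 // mulr_ge0 // ltW. Qed.

(* [x sin3 - y cos3] is the signed distance to the line spanned by the second lattice vector *)
Lemma latx_sin3 a b : latx d th a b * sin3 = a%:~R * row_gap + laty d th a b * cos3.
Proof.
have h : sin3 * cos th - cos3 * sin th = Num.sqrt 3 / 2.
  by rewrite -sin_pi3 (_ : pi / 3 = th + pi / 3 - th) ?sinB //; ring.
by rewrite /latx /laty /row_gap -h /sin3 /cos3; ring.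
Qed.

Lemma latyE a b : laty d th a b = (b%:~R + a%:~R * slope) * (d * sin3).
Proof. by rewrite /laty /slope -/sin3; field; rewrite gt_eqF. Qed.

Definition row_lo (a : int) : int := - Num.floor (half_width + a%:~R * slope).
Definition row_hi (a : int) : int := Num.floor (half_width - a%:~R * slope).

Lemma laty_bounded a b : (-s <= laty d th a b <= s) = (row_lo a <= b <= row_hi a).
Proof.
have dsp : 0 < d * sin3 by rewrite mulr_gt0.
have -> : s = half_width * (d * sin3) by rewrite /half_width divfK ?gt_eqF.
rewrite latyE -mulNr !ler_pM2r // /row_lo /row_hi [in RHS]lerNl !floor_ge_int rmorphN /=.
by apply/idP/idP => /andP[h1 h2]; apply/andP; split; lra.
Qed.

Definition row_count (a : int) : nat := `|(row_hi a - row_lo a + 1)%R|%N.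

Lemma row_count_ge0 a : 0 <= row_hi a - row_lo a + 1.
Proof.
have := floorD1_gt (half_width - a%:~R * slope).
have := floorD1_gt (half_width + a%:~R * slope).
rewrite /row_hi /row_lo opprK !intrD => h1 h2.
suff : (-2)%:~R < (Num.floor (half_width - a%:~R * slope) +
                    Num.floor (half_width + a%:~R * slope))%:~R :> R.
  by rewrite ltr_int; lia.
by rewrite intrD; have := half_width_ge0; lra.
Qed.

Lemma row_countE a : (row_count a)%:R =
  2 * half_width + 1 - frac (half_width + a%:~R * slope)
    - frac (half_width + a%:~R * - slope) :> R.
Proof.
rewrite /row_count natr_absz ger0_norm ?row_count_ge0 //.
by rewrite /row_hi /row_lo /frac mulrN !intrD intrN; ring.
Qed.

Lemma mem_row a b : (b \in int_range (row_lo a) (row_count a)) = (row_lo a <= b <= row_hi a).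
Proof.
rewrite mem_int_range /row_count gez0_abs ?row_count_ge0 //.
by apply/idP/idP => /andP[h1 h2]; apply/andP; split => //; lia.
Qed.

Definition strip (sA : seq int) : set (int * int) :=
  [set ab | ab.1 \in sA /\ -s <= laty d th ab.1 ab.2 <= s].

Lemma stripE sA : strip sA =
  [set` [fset ab in [seq (a, b) | a <- sA, b <- int_range (row_lo a) (row_count a)]]%fset].
Proof.
apply/seteqP; split => -[a b] /=; rewrite inE /=.
  by move=> [ha hb]; apply/allpairsPdep; exists a, b; rewrite mem_row -laty_bounded.
by move/allpairsPdep => [a' [b' [ha hb [-> ->]]]]; split; rewrite //= laty_bounded -mem_row.
Qed.

Lemma strip_finite sA : finite_set (strip sA).
Proof. by rewrite stripE; exact: finite_fset. Qed.

Lemma card_strip sA : uniq sA -> #|` fset_set (strip sA)|%fset = (\sum_(a <- sA) row_count a)%N.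
Proof.
move=> uA; rewrite stripE set_fsetK card_fseq undup_id.
  rewrite size_allpairs_dep sumnE big_map; apply: eq_bigr => a _.
  by rewrite size_map size_iota.
apply: allpairs_uniq_dep => //; first by move=> a _; exact: uniq_int_range.
by move=> [a1 b1] [a2 b2] _ _ /= [-> ->].
Qed.

Lemma sum_row_countE l n : ((\sum_(a <- int_range l n) row_count a)%N%:R : R) =
  n%:R * (2 * half_width + 1) - fracsum n (half_width + l%:~R * slope) slope
    - fracsum n (half_width + l%:~R * - slope) (- slope).
Proof.
rewrite big_map natr_sum -[n in iota _ n]subn0 -/(index_iota 0 n).
rewrite (eq_bigr (fun i => 2 * half_width + 1 - frac (half_width + l%:~R * slope + i%:R * slope)
  - frac (half_width + l%:~R * - slope + i%:R * - slope))); last first.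
  by move=> i _; rewrite row_countE intrD pmulrn; congr (_ - frac _ - frac _); ring.
by rewrite sumrB sumrB sumr_const_nat subn0 [n%:R * _]mulr_natl.
Qed.

Lemma row_count_rate : exists2 mu : R, 2 * half_width - 1 < mu <= 2 * half_width + 1 &
  forall l, asymptotic_rate (fun n => (\sum_(a <- int_range l n) row_count a)%N%:R) mu.
Proof.
have [L1 /andP[L10 L11] hL1] := fracsum_mean half_width slope.
have [L2 /andP[L20 L21] hL2] := fracsum_mean half_width (- slope).
exists (2 * half_width + 1 - L1 - L2); first by apply/andP; split; lra.
move=> l; under eq_fun do rewrite sum_row_countE.
apply: asymptotic_rateD; [apply: asymptotic_rateD |]; [|apply: asymptotic_rateN ..].
- exact: asymptotic_rate_linear.
- by apply: asymptotic_rate_perturb hL1 _ => n; apply: fracsum_shift_int.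
- by apply: asymptotic_rate_perturb hL2 _ => n; apply: fracsum_shift_int.
Qed.

End LatticeRows.

Section Sandwich.
Variable R : realType.
Variables (v d s th : R).
Hypotheses (v_gt0 : 0 < v) (d_gt0 : 0 < d) (s_ge0 : 0 <= s) (sin3_gt0 : 0 < sin3 th).

Local Notation sin3 := (sin3 th).
Local Notation cos3 := (cos3 th).
Local Notation row_gap := (row_gap d).

Definition row_rate := v * sin3 / row_gap.
Definition last_row (T : R) : int := Num.floor (row_rate * T).
Definition margin : nat := (Num.truncn ((s * sin3 + s) / row_gap)).+1.

Lemma row_rate_gt0 : 0 < row_rate.
Proof. by rewrite divr_gt0 ?mulr_gt0 ?row_gap_gt0. Qed.

Lemma margin_gt : s * sin3 + s < margin%:R * row_gap.
Proof. by rewrite -ltr_pdivrMr ?row_gap_gt0 // truncnS_gt. Qed.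

(* such a robot crosses the line [x = 0], at distance [|y| <= s] from the centre, at time [(s + x) / v <= T] *)
Lemma strip_sub_reached T : (2 * margin%:Z <= last_row T)%R ->
  strip d s th (int_range margin `|(last_row T - 2 * margin%:Z + 1)%R|%N)
    `<=` [set ab | reached v d s th T ab].
Proof.
move=> hZ [a b] [/= ha hb]; rewrite /reached /=.
rewrite mem_int_range gez0_abs in ha; last by lia.
have [ha1 ha2] : margin%:Z <= a /\ a <= last_row T - margin%:Z by lia.
have gp := row_gap_gt0 d_gt0; have hA := margin_gt.
have /andP[hZ1 _] := floor_itv (row_rate * T); rewrite -/(last_row T) in hZ1.
have rT : row_rate * T * row_gap = v * T * sin3 by rewrite /row_rate; field; rewrite gt_eqF.
have hcos : -1 <= cos3 <= 1 by rewrite cos_geN1 cos_le1.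
have eq := latx_sin3 d th a b.
set X := latx d th a b in eq *; set Y := laty d th a b in hb eq *.
have hYc : -s <= Y * cos3 <= s.
  by case/andP: hcos => ? ?; case/andP: hb => ? ?; apply/andP; split; nra.
have ha1' : margin%:R * row_gap <= a%:~R * row_gap by rewrite ler_pM2r // pmulrn ler_int.
have ha2' : a%:~R * row_gap <= (last_row T)%:~R * row_gap - margin%:R * row_gap.
  by rewrite -mulrBl ler_pM2r // pmulrn -intrB ler_int.
have hX1 : s <= X by rewrite -(ler_pM2r sin3_gt0); case/andP: hYc => ? ?; lra.
have hX2 : X <= v * T - s.
  rewrite -(ler_pM2r sin3_gt0); case/andP: hYc => ? ?.
  have : (last_row T)%:~R * row_gap <= row_rate * T * row_gap by rewrite ler_pM2r.
  lra.
split; first lra.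
exists ((s + X) / v); split.
  by rewrite divr_ge0 ?ler_pdivrMr ?(ltW v_gt0) //=; lra.
rewrite (_ : s + X - v * ((s + X) / v) = 0); last by field; rewrite gt_eqF.
by rewrite expr0n /= add0r sqrtr_sqr ler_norml.
Qed.

Lemma reached_sub_strip T : 0 <= T ->
  [set ab | reached v d s th T ab] `<=`
    strip d s th (int_range (- margin%:Z) `|(last_row T + 2 * margin%:Z + 1)%R|%N).
Proof.
move=> T0 [a b] [/= hX [t [/andP[t0 tT] hd]]].
have gp := row_gap_gt0 d_gt0; have hA := margin_gt.
have /andP[_ hZ2] := floor_itv (row_rate * T); rewrite -/(last_row T) intrD mulr1z in hZ2.
have rT : row_rate * T * row_gap = v * T * sin3 by rewrite /row_rate; field; rewrite gt_eqF.
have Z0 : 0 <= last_row T by rewrite floor_ge0 mulr_ge0 // ltW // row_rate_gt0.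
have hcos : -1 <= cos3 <= 1 by rewrite cos_geN1 cos_le1.
have eq := latx_sin3 d th a b.
set X := latx d th a b in hX eq hd *; set Y := laty d th a b in eq hd *.
have hQ : (s + X - v * t) ^+ 2 + Y ^+ 2 <= s ^+ 2.
  by rewrite -ler_sqrt ?sqr_ge0 // sqrtr_sqr ger0_norm.
have hY : -s <= Y <= s.
  rewrite -ler_norml -(ler_sqr (normr_ge0 _) s_ge0) real_normK ?num_real //.
  by have := sqr_ge0 (s + X - v * t); lra.
have hYc : -s <= Y * cos3 <= s.
  by case/andP: hcos => ? ?; case/andP: hY => ? ?; apply/andP; split; nra.
have hXv : X <= v * T.
  have : (s + X - v * t) ^+ 2 <= s ^+ 2 by have := sqr_ge0 Y; lra.
  have : v * t <= v * T by rewrite ler_pM2l.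
  nra.
have hXc : X * sin3 <= v * T * sin3 by rewrite ler_pM2r.
case/andP: hYc => hy1 hy2.
have Xs : 0 <= X * sin3 by rewrite mulr_ge0 // ltW.
have ss : 0 <= s * sin3 by rewrite mulr_ge0 // ltW.
have l1 : (- margin%:Z)%:~R * row_gap < (a + 1)%:~R * row_gap.
  by rewrite intrD intrN mulr1z -pmulrn; lra.
have l2 : a%:~R * row_gap < (last_row T + margin%:Z + 1)%:~R * row_gap.
  have : row_rate * T * row_gap < ((last_row T)%:~R + 1) * row_gap by rewrite ltr_pM2r.
  by rewrite !intrD mulr1z -pmulrn; lra.
rewrite ltr_pM2r // ltr_int in l1; rewrite ltr_pM2r // ltr_int in l2.
split => //=; rewrite mem_int_range gez0_abs; clear -l1 l2 Z0; lia.
Qed.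

Lemma Nreached_sandwich T : 0 <= T -> (2 * margin%:Z <= last_row T)%R ->
  ((\sum_(a <- int_range margin `|(last_row T - 2 * margin%:Z + 1)%R|%N) row_count d s th a
     <= Nreached v d s th T)
  /\ (Nreached v d s th T <=
      \sum_(a <- int_range (- margin%:Z) `|(last_row T + 2 * margin%:Z + 1)%R|%N)
        row_count d s th a))%N.
Proof.
move=> T0 hZ; have fin := strip_finite d_gt0 s_ge0 sin3_gt0.
have finR := sub_finite_set (reached_sub_strip T0) (fin _).
rewrite /Nreached -!card_strip ?uniq_int_range //; split; apply: fsubset_leq_card.
  by rewrite -(fset_set_sub (fin _) finR); apply: strip_sub_reached.
by rewrite -(fset_set_sub finR (fin _)); apply: reached_sub_strip.
Qed.


Lemma Nreached_rate :
  exists2 mu, 2 * half_width d s th - 1 < mu <= 2 * half_width d s th + 1 &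
  forall e, 0 < e -> exists K T0, forall T, T0 <= T ->
    `|(Nreached v d s th T)%:R - mu * row_rate * T| <= e * T + K.
Proof.
have [mu hmu hrate] := row_count_rate d_gt0 s_ge0 sin3_gt0.
exists mu => // e e0.
have rr0 := row_rate_gt0; set C : R := 2 * margin%:R + 1.
have [K1 hK1] := asymptotic_rate_at C (hrate margin) (ltW rr0) e0.
have [K2 hK2] := asymptotic_rate_at C (hrate (- margin%:Z)) (ltW rr0) e0.
exists (`|K1| + `|K2|), (C / row_rate) => T hT.
have hrT : C <= row_rate * T by rewrite mulrC -ler_pdivrMr.
have T0 : 0 <= T by apply: le_trans hT; rewrite divr_ge0 ?(ltW rr0) // /C addr_ge0 ?mulr_ge0.
have /andP[z1 z2] := floor_itv (row_rate * T); rewrite -/(last_row T) in z1 z2; rewrite intrD mulr1z in z2.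
have hZ : (2 * margin%:Z <= last_row T)%R.
  by rewrite /last_row floor_ge_int intrM -!pmulrn; rewrite /C in hrT; lra.
have [lo hi] := Nreached_sandwich T0 hZ.
move: lo hi; rewrite -!(ler_nat R).
set n1 := `|(last_row T - 2 * margin%:Z + 1)%R|%N.
set n2 := `|(last_row T + 2 * margin%:Z + 1)%R|%N.
have Z0 : (0 <= last_row T)%R by rewrite /last_row floor_ge0 mulr_ge0 // ltW.
have n1E : n1%:R = (last_row T)%:~R - 2 * margin%:R + 1 :> R.
  rewrite pmulrn gez0_abs; last by clear -hZ; lia.
  by rewrite !intrD intrN intrM -!pmulrn; lra.
have n2E : n2%:R = (last_row T)%:~R + 2 * margin%:R + 1 :> R.
  rewrite pmulrn gez0_abs; last by clear -Z0; lia.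
  by rewrite !intrD intrM -!pmulrn; lra.
have m0 : (0 : R) <= margin%:R := ler0n _ _.
have hn1 : `|n1%:R - row_rate * T| <= C by rewrite n1E ler_norml /C; apply/andP; split; lra.
have hn2 : `|n2%:R - row_rate * T| <= C by rewrite n2E ler_norml /C; apply/andP; split; lra.
have := hK1 T n1 T0 hn1; have := hK2 T n2 T0 hn2.
have := ler_norm K1; have := ler_norm K2; have := normr_ge0 K1; have := normr_ge0 K2.
rewrite !ler_norml => ? ? ? ? /andP[? ?] /andP[? ?] lo hi.
apply/andP; split; lra.
Qed.

End Sandwich.

Lemma cvg_div_of_linear_bound (R : realType) (N : R -> R) (m : R) :
  (forall e, 0 < e -> exists K T0, forall T, T0 <= T -> `|N T - m * T| <= e * T + K) ->
  N T / T @[T --> +oo] --> m.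
Proof.
move=> hN; apply/cvgrPdist_le => e e0.
have e2 : 0 < e / 2 by rewrite divr_gt0.
have [K [T0 hK]] := hN _ e2.
exists (Num.max 1 (Num.max T0 (2 * (`|K| + 1) / e))); split; first by rewrite num_real.
move=> T; rewrite !gt_max => /andP[T1 /andP[T2 T3]].
have Tp : 0 < T by lra.
have hKT : `|K| + 1 <= e / 2 * T by move: T3; rewrite ltr_pdivrMr // => ?; lra.
rewrite -[m](mulfK (lt0r_neq0 Tp)) -mulrBl normrM normfV (gtr0_norm Tp) ler_pdivrMr //.
have := hK T (ltW T2); have := ler_norm K; rewrite !ler_norml => ? /andP[? ?].
apply/andP; split; lra.
Qed.

Lemma row_rateE (R : realType) (v d th : R) : 0 < d ->
  row_rate v d th = 2 * v * cos (th - pi / 6) / (Num.sqrt 3 * d).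
Proof.
move=> d0; have q0 : 0 < Num.sqrt 3 :> R by rewrite sqrtr_gt0.
rewrite /row_rate /row_gap /sin3 -sinDpihalf (_ : th - pi / 6 + pi / 2 = th + pi / 3).
  by field; rewrite !gt_eqF.
by field.
Qed.

Lemma half_width_row_rateE (R : realType) (v d s th : R) : 0 < d -> 0 < sin3 th ->
  2 * half_width d s th * row_rate v d th = 4 * v * s / (Num.sqrt 3 * d ^+ 2).
Proof.
move=> d0 s0; have q0 : 0 < Num.sqrt 3 :> R by rewrite sqrtr_gt0.
by rewrite /half_width /row_rate /row_gap; field; rewrite !gt_eqF.
Qed.

Unset Implicit Arguments.

Theorem proposition6 (R : realType) (v d s th : R) :
  0 < v -> 0 < d -> d / 2 <= s -> 0 <= th < pi / 3 ->
  exists L : R,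
    f_h v d s th T @[T --> +oo] --> L /\
    4 * v * s / (Num.sqrt 3 * d ^+ 2) - 2 * v * cos (th - pi / 6) / (Num.sqrt 3 * d) < L /\
    L <= 4 * v * s / (Num.sqrt 3 * d ^+ 2) + 2 * v * cos (th - pi / 6) / (Num.sqrt 3 * d).
Proof.
move=> v0 d0 hs /andP[th0 th3].
have s0 : 0 <= s by lra.
have sin3_gt0 : 0 < sin3 th.
  by apply: sin_gt0_pi; have := pi_gt0 R => ?; apply/andP; split; lra.
have [mu /andP[mu_lo mu_hi] hN] := Nreached_rate v0 d0 s0 sin3_gt0.
have r0 := row_rate_gt0 v0 d0 sin3_gt0.
exists (mu * row_rate v d th); split.
  apply: (@cvg_div_of_linear_bound _ _ (mu * row_rate v d th)) => e e0.
  have [K [T0 hK]] := hN e e0; exists (K + 1), T0 => T /hK.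
  by rewrite !ler_norml => /andP[? ?]; apply/andP; split; lra.
rewrite -(half_width_row_rateE v s d0 sin3_gt0) -(row_rateE v th d0).
by rewrite -(ltr_pM2r r0) in mu_lo; rewrite -(ler_pM2r r0) in mu_hi; split; lra.
Qed.
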